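(* Let $s=0$, $\lambda\in\mathbb{C}$ and $k\in\mathbb{Z}\setminus\{0\}$. Every odd superderivation of $\mathfrak{L}^0_\lambda$ of degree $k$ is inner; more precisely, it equals $\mathrm{ad}(aG_k+bH_k)$ for some $a,b\in\mathbb{C}$.
   Context: For $s\in\{0,\tfrac12\}$ and $\lambda\in\mathbb{C}$, $\mathfrak{L}^s_\lambda$ is the complex Lie superalgebra with basis $\{L_m,I_m,G_p,H_p : m\in\mathbb{Z},\ p\in s+\mathbb{Z}\}$, even part spanned by the $L_m,I_m$, odd part spanned by the $G_p,H_p$, and brackets $[L_m,L_n]=(m-n)L_{m+n}$, $[L_m,I_n]=(m-n)I_{m+n}$, $[L_m,H_p]=(\tfrac m2-p)H_{m+p}$, $[L_m,G_p]=(\tfrac m2-p)G_{m+p}+\lambda(m+1)H_{m+p}$, $[I_m,G_p]=(m-2p)H_{m+p}$, $[G_p,G_q]=I_{p+q}$, plus those given by super-antisymmetry $[y,x]=-(-1)^{|x||y|}[x,y]$; all other brackets of basis elements are zero. $\mathfrak{L}_r$ is spanned by basis elements of index $r$. A superderivation of parity $a$ is a linear map $D$ shifting parity by $a$ with $D([x,y])=[D(x),y]+(-1)^{a|x|}[x,D(y)]$ for homogeneous $x,y$; it has degree $r$ if $D(\mathfrak{L}_q)\subset\mathfrak{L}_{q+r}$. $\mathrm{ad}\,x(y)=[x,y]$. *)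

From HB Require Import structures.
From mathcomp Require Import all_boot all_order all_algebra.
Set Implicit Arguments. Unset Strict Implicit. Unset Printing Implicit Defensive.
Import Order.TTheory GRing.Theory Num.Theory.
Local Open Scope ring_scope.

(* The Lie superalgebra L^0_lambda is Z-graded: L_r = span(L_r, I_r, G_r, H_r)
   (s = 0, so p ranges over Z).  An element of the homogeneous component L_r
   is encoded by its coordinate row vector in 'rV[C]_4 w.r.t. the ordered
   basis (L_r, I_r, G_r, H_r), i.e. index 0 = L, 1 = I, 2 = G, 3 = H. *)

Definition kL : 'I_4 := inord 0.
Definition kI : 'I_4 := inord 1.
Definition kG : 'I_4 := inord 2.
Definition kH : 'I_4 := inord 3.

(* parity of the basis kind: true = odd (G, H) *)
Definition par (i : 'I_4) : bool := (2 <= i)%N.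

Definition cvec {C : pzRingType} (c0 c1 c2 c3 : C) : 'rV[C]_4 :=
  \row_(j < 4) nth 0 [:: c0; c1; c2; c3] j.

(* bb lam m n i j = [e_{i,m}, e_{j,n}] as coordinates in L_{m+n}. *)
Definition bb (C : fieldType) (lam : C) (m n : int) (i j : 'I_4) : 'rV[C]_4 :=
  let M : C := m%:~R in let N : C := n%:~R in
  match nat_of_ord i, nat_of_ord j with
  | 0, 0 => cvec (M - N) 0 0 0
  | 0, 1 => cvec 0 (M - N) 0 0
  | 1, 0 => cvec 0 (M - N) 0 0                               (* [I_m,L_n] = -[L_n,I_m] *)
  | 0, 2 => cvec 0 0 (M / 2 - N) (lam * (M + 1))
  | 2, 0 => cvec 0 0 (- (N / 2 - M)) (- (lam * (N + 1)))     (* [G_m,L_n] = -[L_n,G_m] *)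
  | 0, 3 => cvec 0 0 0 (M / 2 - N)
  | 3, 0 => cvec 0 0 0 (- (N / 2 - M))                       (* [H_m,L_n] = -[L_n,H_m] *)
  | 1, 2 => cvec 0 0 0 (M - 2 * N)
  | 2, 1 => cvec 0 0 0 (- (N - 2 * M))                       (* [G_m,I_n] = -[I_n,G_m] *)
  | 2, 2 => cvec 0 1 0 0
  | _, _ => 0
  end.

Definition ev {C : fieldType} (j : 'I_4) : 'rV[C]_4 := delta_mx 0 j.

Definition br (C : fieldType) (lam : C) (m n : int) (u v : 'rV[C]_4) : 'rV[C]_4 :=
  \sum_(i < 4) \sum_(j < 4) (u 0 i * v 0 j) *: bb lam m n i j.

(* A linear map D of degree k is determined by the images of the basis
   vectors: D i q = D(e_{i,q}) in L_{q+k} (coordinates). Its value on a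
   vector u of L_q is applyD D q u. *)
Definition applyD (C : fieldType) (D : 'I_4 -> int -> 'rV[C]_4) (q : int)
    (u : 'rV[C]_4) : 'rV[C]_4 :=
  \sum_(i < 4) u 0 i *: D i q.

(* D (given on basis, of degree k) is an odd superderivation:
   - it shifts parity (images of even basis vectors are odd and vice versa);
   - D[x,y] = [Dx,y] + (-1)^{|x|}[x,Dy] on homogeneous basis elements
     (which suffices by bilinearity). *)
Definition is_odd_superder (C : fieldType) (lam : C) (k : int)
    (D : 'I_4 -> int -> 'rV[C]_4) : Prop :=
  (forall (i : 'I_4) (q : int) (j : 'I_4), par j = par i -> D i q 0 j = 0) /\
  (forall (i j : 'I_4) (m n : int),
      applyD D (m + n) (bb lam m n i j)
      = br lam (m + k) n (D i m) (ev j)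
        + (-1) ^+ par i *: br lam m (n + k) (ev i) (D j n)).

Definition adGH (C : fieldType) (lam : C) (k : int) (a b : C)
    (i : 'I_4) (m : int) : 'rV[C]_4 :=
  a *: bb lam k m kG i + b *: bb lam k m kH i.

(* Subtracting ad(a G_k + b H_k) from D, with a, b read off from D(L_0) (an odd
   vector of L_k, hence of the form [a G_k + b H_k, L_0] for a unique pair since
   k <> 0), leaves an odd superderivation E with E(L_0) = 0.  The rule for E on
   [L_0, x] says that E commutes with ad L_0.  On L_n, ad L_0 is -n plus the
   nilpotent map G_n |-> lam H_n, so E maps the (-n)-part to the -(n+k)-part;
   as k <> 0 this forces first the G-coordinate of E, then E itself, to vanish. *)

From HB Require Import structures.
From mathcomp Require Import all_boot all_order all_algebra.
From mathcomp Require Import ring.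
Set Implicit Arguments. Unset Strict Implicit. Unset Printing Implicit Defensive.
Import Order.TTheory GRing.Theory Num.Theory.
Local Open Scope ring_scope.

Lemma ord4E : (kL = ord0) * (kI = lift ord0 ord0) * (kG = lift ord0 (lift ord0 ord0))
  * (kH = lift ord0 (lift ord0 (lift ord0 ord0))).
Proof. by do !split; apply/val_inj; rewrite /= inordK. Qed.

Lemma ord4P (i : 'I_4) : [\/ i = kL, i = kI, i = kG | i = kH].
Proof.
by case: i => [[|[|[|[|i]]]] hi] //; [apply: Or41|apply: Or42|apply: Or43|apply: Or44];
  apply/val_inj; rewrite /= inordK.
Qed.

Lemma big_ord4 (V : nmodType) (F : 'I_4 -> V) :
  \sum_(i < 4) F i = F kL + F kI + F kG + F kH.
Proof. by rewrite !big_ord_recl big_ord0 addr0 !addrA !ord4E. Qed.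

Lemma ord4_val : (nat_of_ord kL = 0%N) * (nat_of_ord kI = 1%N)
  * (nat_of_ord kG = 2%N) * (nat_of_ord kH = 3%N).
Proof. by rewrite !inordK. Qed.

Lemma par_kL : par kL = false. Proof. by rewrite /par inordK. Qed.
Lemma par_kI : par kI = false. Proof. by rewrite /par inordK. Qed.

Lemma eq_of_same_diff (V : zmodType) (A B X Y : V) : A = B -> X - Y = A - B -> X = Y.
Proof. by move=> -> /eqP; rewrite subrr subr_eq0 => /eqP. Qed.

Section Bracket.
Variables (C : fieldType) (lam : C).

Lemma evE (i j : 'I_4) : ev i 0 j = (i == j)%:R :> C.
Proof. by rewrite !mxE /= eq_sym. Qed.

Lemma br_evr m n u j : br lam m n u (ev j) = \sum_(i < 4) u 0 i *: bb lam m n i j.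
Proof.
apply: eq_bigr => i _; rewrite (bigD1 j) //= big1 ?addr0; first by rewrite evE eqxx mulr1.
by move=> j' hj'; rewrite evE eq_sym (negbTE hj') mulr0 scale0r.
Qed.

Lemma br_evl m n i v : br lam m n (ev i) v = \sum_(j < 4) v 0 j *: bb lam m n i j.
Proof.
rewrite /br (bigD1 i) //= [X in _ + X]big1 ?addr0; last first.
  by move=> i' hi'; apply: big1 => j _; rewrite evE eq_sym (negbTE hi') mul0r scale0r.
by apply: eq_bigr => j _; rewrite evE eqxx mul1r.
Qed.

Lemma br0l m n v : br lam m n 0 v = 0.
Proof. by apply: big1 => i _; apply: big1 => j _; rewrite mxE mul0r scale0r. Qed.

Lemma brBl m n u1 u2 v : br lam m n (u1 - u2) v = br lam m n u1 v - br lam m n u2 v.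
Proof.
rewrite /br -sumrB; apply: eq_bigr => i _; rewrite -sumrB; apply: eq_bigr => j _.
by rewrite !mxE mulrBl scalerBl.
Qed.

Lemma brBr m n u v1 v2 : br lam m n u (v1 - v2) = br lam m n u v1 - br lam m n u v2.
Proof.
rewrite /br -sumrB; apply: eq_bigr => i _; rewrite -sumrB; apply: eq_bigr => j _.
by rewrite !mxE mulrBr scalerBl.
Qed.

Ltac bb_simpl := rewrite /applyD ?br_evl ?br_evr /adGH ?big_ord4 /bb ?ord4_val /=
  ?mxE -?val_eqE /= ?ord4_val /= ?intrD ?mulr0z ?mul0r.

Lemma br_L0 n v : br lam 0 n (ev kL) v = - n%:~R *: v + (lam * v 0 kG) *: ev kH.
Proof.
apply/rowP => l; rewrite br_evl.
by case: (ord4P l) => ->; bb_simpl; ring.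
Qed.

Lemma applyD_bb_L0 (D : 'I_4 -> int -> 'rV[C]_4) m i :
  applyD D m (bb lam 0 m kL i) = - m%:~R *: D i m + ((i == kG)%:R * lam) *: D kH m.
Proof.
by apply/rowP => l; case: (ord4P i) => ->; bb_simpl; ring.
Qed.

Definition derives_L0 (k : int) (D : 'I_4 -> int -> 'rV[C]_4) : Prop :=
  forall i m, applyD D m (bb lam 0 m kL i)
              = br lam k m (D kL 0) (ev i) + br lam 0 (m + k) (ev kL) (D i m).

Lemma odd_superder_derives_L0 k D : is_odd_superder lam k D -> derives_L0 k D.
Proof. by move=> [_ Hder] i m; move: (Hder kL i 0 m); rewrite !add0r par_kL expr0 scale1r. Qed.

Lemma derives_L0B k D1 D2 : derives_L0 k D1 -> derives_L0 k D2 ->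
  derives_L0 k (fun i m => D1 i m - D2 i m).
Proof.
move=> h1 h2 i m; rewrite brBl brBr addrACA -opprD -h1 -h2 /applyD -sumrB.
by apply: eq_bigr => j _; rewrite scalerBr.
Qed.

Lemma adGH_derives_L0 k a b : derives_L0 k (adGH lam k a b).
Proof.
move=> i m; rewrite applyD_bb_L0 br_L0; apply/rowP => l.
by case: (ord4P i) => ->; case: (ord4P l) => ->; bb_simpl; ring.
Qed.

Lemma derives_L0_eq0 k D : k%:~R != 0 :> C -> derives_L0 k D -> D kL 0 = 0 ->
  forall i m, D i m = 0.
Proof.
move=> kC hD hL0.
have shift i m :
    k%:~R *: D i m = (lam * D i m 0 kG) *: ev kH - ((i == kG)%:R * lam) *: D kH m.
  apply/rowP => l; move/rowP/(_ l): (hD i m).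
  rewrite applyD_bb_L0 br_L0 hL0 br0l add0r intrD !mxE => E.
  by apply: (eq_of_same_diff E); ring.
have cancel_k (v : 'rV[C]_4) : k%:~R *: v = 0 -> v = 0.
  by move/eqP; rewrite scaler_eq0 (negbTE kC) => /eqP.
have DH_G m : D kH m 0 kG = 0.
  move/rowP/(_ kG): (shift kH m); rewrite !mxE -!val_eqE /= !ord4_val /= mulr0 !mul0r subr0.
  by move/eqP; rewrite mulf_eq0 (negbTE kC) => /eqP.
have DH m : D kH m = 0.
  by apply: cancel_k; rewrite shift DH_G mulr0 scale0r -val_eqE /= !ord4_val mul0r scale0r subr0.
have D_G i m : D i m 0 kG = 0.
  move/rowP/(_ kG): (shift i m); rewrite DH !mxE -!val_eqE /= !ord4_val /= !mulr0 subr0.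
  by move/eqP; rewrite mulf_eq0 (negbTE kC) => /eqP.
by move=> i m; apply: cancel_k; rewrite shift DH D_G mulr0 scale0r scaler0 subr0.
Qed.

Lemma odd_row_eq_adGH_L0 k (v : 'rV[C]_4) : k%:~R != 0 :> C ->
  v 0 kL = 0 -> v 0 kI = 0 ->
  v = adGH lam k (v 0 kG / k%:~R) ((v 0 kH + v 0 kG / k%:~R * lam) / k%:~R) kL 0.
Proof.
move=> kC vL vI; apply/rowP => l.
by case: (ord4P l) => ->; bb_simpl; rewrite ?vL ?vI; field.
Qed.

End Bracket.

Theorem lemma2p4 (C : numClosedFieldType) (lam : C) (k : int) (hk : k != 0)
    (D : 'I_4 -> int -> 'rV[C]_4) :
  is_odd_superder lam k D ->
  exists a b : C, forall (i : 'I_4) (m : int), D i m = adGH lam k a b i m.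
Proof.
move=> hD; have kC : k%:~R != 0 :> C by rewrite intr_eq0.
have [Dpar _] := hD.
have parIL : par kI = par kL by rewrite par_kI par_kL.
have DL0 := odd_row_eq_adGH_L0 lam kC (Dpar kL 0 kL erefl) (Dpar kL 0 kI parIL).
set a := _ / _ in DL0; set b := _ / _ in DL0.
exists a, b => i m; apply/eqP; rewrite -subr_eq0; apply/eqP; move: i m.
apply: (derives_L0_eq0 kC); last by rewrite -DL0 subrr.
exact: derives_L0B (odd_superder_derives_L0 hD) (adGH_derives_L0 lam k a b).
Qed.
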